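(* Let $q$ be a prime power. Then the subgroup of $\overline{\mathbb{Q}}^*$ generated by all $q$-Weil numbers of weight one has infinite rank.
   Context: A $q$-Weil number of weight one is an algebraic integer $\alpha\in\overline{\mathbb{Q}}$ such that $|\iota(\alpha)|=q^{1/2}$ for every embedding $\iota:\overline{\mathbb{Q}}\hookrightarrow\mathbb{C}$. *)

From HB Require Import structures.
From mathcomp Require Import all_boot all_order all_algebra all_field.
Set Implicit Arguments. Unset Strict Implicit. Unset Printing Implicit Defensive.
Import Order.TTheory GRing.Theory Num.Theory.
Local Open Scope ring_scope.

(* algC plays the role of \overline{Q}; its field embeddings into C
   correspond to ring morphisms algC -> algC. *)

Definition prime_power (q : nat) : Prop :=
  exists p e : nat, prime p /\ (0 < e)%N /\ q = (p ^ e)%N.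

Definition weil_number (q : nat) (a : algC) : Prop :=
  a \in Aint /\ forall u : {rmorphism algC -> algC}, `|u a| = sqrtC q%:R.

Definition in_weil_group (q : nat) (x : algC) : Prop :=
  exists (n : nat) (w : 'I_n -> algC) (k : 'I_n -> int),
    (forall i, weil_number q (w i)) /\ x = \prod_(i < n) (w i) ^ (k i).

Definition infinite_rank (G : algC -> Prop) : Prop :=
  forall n : nat, exists x : 'I_n -> algC,
    (forall i, G (x i)) /\
    forall k : 'I_n -> int, \prod_(i < n) (x i) ^ (k i) = 1 -> forall i, k i = 0.

(* Let z be a primitive 2^(B+4)-th root of unity and w a root of
   X^2 - (z + z^-1) X + q^5.  Every conjugate of w is a root of such a quadratic
   with a real middle coefficient of absolute value at most 2, hence has absolute
   value q^(5/2), and a fifth root of w is a q-Weil number.  The automorphisms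
   z |-> z^c, c odd and below 2B + 2, send w to roots w_c of
   X^2 - b_c X + q^5, b_c = z^c + z^-c, and no ratio rho = w_c / w_c' is a root of
   unity: the identity (b_c - rho^-1 b_c') (b_c - rho b_c') = -(rho - rho^-1)^2 q^5
   either forces rho = +-1, hence a rational relation between b_c and b_c' of
   degree below phi(2^(B+4)), or, read at a conjugate of rho far from +-1, forces
   q^5 <= 16.  As the x_i of an independent family have finitely many conjugates,
   for B large two of these automorphisms agree on all x_i; applying both to a
   relation between the x_i and w kills the exponent of w, so w can be added to
   the family. *)

From HB Require Import structures.
From mathcomp Require Import all_boot all_order all_algebra all_field.
From mathcomp Require Import ring zify.
Set Implicit Arguments. Unset Strict Implicit. Unset Printing Implicit Defensive.
Import Order.TTheory GRing.Theory Num.Theory.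
Local Open Scope ring_scope.

Lemma norm_unity_root (R : numDomainType) (x : R) (n : nat) :
  (0 < n)%N -> x ^+ n = 1 -> `|x| = 1.
Proof.
move=> n_gt0 xn1; apply/eqP.
by rewrite -(pexpr_eq1 n_gt0) ?normr_ge0 // -normrX xn1 normr1.
Qed.

Lemma norm_addV_le2 (R : numFieldType) (x : R) : `|x| = 1 -> `|x + x^-1| <= 2.
Proof. by move=> x1; rewrite (le_trans (ler_normD _ _)) // normfV x1 invr1. Qed.

Lemma Creal_addV (x : algC) : `|x| = 1 -> x + x^-1 \is Num.real.
Proof.
move=> x1; have -> : x^-1 = x^* by rewrite invC_norm x1 expr1n invr1 mul1r.
by rewrite CrealE rmorphD /= conjCK addrC.
Qed.

(* The roots are the non-real pair z, z^*, whose product is Q. *)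
Lemma normCK_quadratic_root (b Q z : algC) :
  b \is Num.real -> Q \is Num.real -> b ^+ 2 < 4 * Q ->
  z ^+ 2 - b * z + Q = 0 -> `|z| ^+ 2 = Q.
Proof.
move=> bR QR disc_lt0 zroot.
have zcroot : z^* ^+ 2 - b * z^* + Q = 0.
  by rewrite -(conj_Creal bR) -(conj_Creal QR) -rmorphXn -!rmorphM -rmorphB -rmorphD zroot rmorph0.
have : (z^* - z) * (z^* + z - b) = 0.
  by rewrite -[RHS](subrr 0) -{1}zcroot -zroot; ring.
move/eqP; rewrite mulf_eq0 subr_eq0 => /orP[/eqP zc | ].
  have zR : z \is Num.real by rewrite CrealE zc.
  have : 0 <= (2 * z - b) ^+ 2 by rewrite real_exprn_even_ge0 ?rpredB ?rpredM ?rpred_nat.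
  have -> : (2 * z - b) ^+ 2 = 4 * (z ^+ 2 - b * z + Q) + (b ^+ 2 - 4 * Q) by ring.
  by rewrite zroot mulr0 add0r subr_ge0 => /(lt_le_trans disc_lt0); rewrite ltxx.
rewrite subr_eq0 => /eqP zcb.
have -> : `|z| ^+ 2 = Q - (z ^+ 2 - b * z + Q) by rewrite normCK -zcb; ring.
by rewrite zroot subr0.
Qed.

Lemma exists_quadratic_root (b c : algC) : exists x : algC, x ^+ 2 - b * x + c = 0.
Proof.
set s := sqrtC (b ^+ 2 - 4 * c); exists ((b + s) / 2).
have -> : ((b + s) / 2) ^+ 2 - b * ((b + s) / 2) + c = (s ^+ 2 - (b ^+ 2 - 4 * c)) / 4.
  by field.
by rewrite sqrtCK subrr mul0r.
Qed.

(* With C the minimal polynomial of beta, of degree d, y is a root of the monic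
   integral polynomial X^(e d) C((X^(2e) + Q) / X^e). *)
Lemma Aint_of_quadratic_pow_root (beta Q y : algC) (e : nat) :
  beta \in Aint -> Q \in Num.int -> (0 < e)%N ->
  y ^+ (2 * e) - beta * y ^+ e + Q = 0 -> y \in Aint.
Proof.
move=> Abeta QZ e_gt0 yroot.
set C := minCpoly beta; set d := (size C).-1.
have sizeC : size C = d.+1 by rewrite /d prednK // (leq_trans _ (size_minCpoly beta)).
pose A := 'X^(2 * e) + Q%:P.
have monA : A \is monic by rewrite monicXnaddC ?muln_gt0.
have sizeAX i : size (A ^+ i) = (2 * e * i).+1.
  have := size_exp A i; rewrite size_XnaddC ?muln_gt0 //=.
  by move=> <-; rewrite prednK // size_poly_gt0 monic_neq0 ?monic_exp.
pose T (i : 'I_d.+1) := A ^+ i * 'X^(e * (d - i)).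
pose S := \sum_(i < d.+1) C`_i *: T i.
apply: (@root_monic_Aint S).
- have Ay : A.[y] = beta * y ^+ e.
    by rewrite hornerD hornerXn hornerC -[LHS]subr0 -yroot; ring.
  have Ty i : (T i).[y] = beta ^+ i * (y ^+ e) ^+ d.
    rewrite hornerM horner_exp Ay hornerXn exprMn -mulrA -!exprM -exprD.
    by rewrite -mulnDr subnKC // -ltnS.
  rewrite /root /S horner_sum.
  under eq_bigr do rewrite hornerZ Ty mulrA.
  by rewrite -mulr_suml -sizeC -horner_coef (eqP (root_minCpoly beta)) mul0r.
- rewrite /S big_ord_recr /= addrC; apply/monicP.
  have -> : C`_d = 1 by have /monicP := minCpoly_monic beta; rewrite lead_coefE sizeC.
  rewrite scale1r lead_coefDl /T /= subnn muln0 mulr1 ?(monicP (monic_exp _ monA)) //.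
  rewrite sizeAX ltnS; apply: (leq_trans (size_sum _ _ _)); apply/bigmax_leqP => i _.
  rewrite (leq_trans (size_scale_leq _ _)) // (leq_trans (size_polyMleq _ _)) //.
  rewrite sizeAX size_polyXn /=; have := ltn_ord i; nia.
- change (S \is a polyOver Num.int_num_subdef).
  apply: rpred_sum => i _; apply: polyOverZ; first exact/polyOverP.
  by rewrite rpredM ?rpredX ?rpredD ?polyOverXn ?polyOverX ?polyOverC.
Qed.

Lemma weil_number_of_quadratic_pow_root (q N e : nat) (z y : algC) :
  (1 < q)%N -> (0 < N)%N -> z ^+ N = 1 -> (0 < e)%N ->
  y ^+ (2 * e) - (z + z^-1) * y ^+ e + (q ^ e)%:R = 0 -> weil_number q y.
Proof.
move=> q_gt1 N_gt0 zN1 e_gt0 root_y; split.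
  apply: Aint_of_quadratic_pow_root e_gt0 root_y; last exact: natr_int.
  by rewrite rpredD ?rpredV ?(Aint_unity_root N_gt0) // ?unity_rootE ?exprVn zN1 ?invr1.
move=> u; have uz1 : `|u z| = 1.
  by apply: (norm_unity_root N_gt0); rewrite -rmorphXn zN1 rmorph1.
have root_uy : (u y ^+ e) ^+ 2 - (u z + (u z)^-1) * u y ^+ e + (q ^ e)%:R = 0.
  rewrite -exprM mulnC; move: (congr1 u root_y).
  by rewrite rmorphD rmorphB rmorphM rmorphD fmorphV !rmorphXn rmorph_nat rmorph0.
have disc_lt0 : (u z + (u z)^-1) ^+ 2 < 4 * (q ^ e)%:R.
  have b_le4 : `|u z + (u z)^-1| ^+ 2 <= 4.
    rewrite (_ : 4 = 2 ^+ 2 :> algC); last by rewrite expr2 -natrM.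
    by rewrite lerXn2r ?nnegrE ?normr_ge0 ?ler0n ?norm_addV_le2.
  rewrite -real_normK ?Creal_addV // (le_lt_trans b_le4) //.
  by rewrite -[ltLHS]mulr1 ltr_pM2l ?ltr0n // ltr1n -(exp1n e) ltn_exp2r.
have := normCK_quadratic_root (Creal_addV uz1) (realn _ _) disc_lt0 root_uy.
rewrite normrX -exprM mulnC exprM natrX => /(pexpIrn e_gt0).
by move=> <-; rewrite ?sqrCK ?normr_ge0 // nnegrE ?exprn_ge0 ?ler0n.
Qed.

Lemma prodr_ilt1 (R : numDomainType) (I : finType) (P : pred I) (F : I -> R) (i0 : I) :
  P i0 -> (forall i, P i -> 0 <= F i < 1) -> \prod_(i | P i) F i < 1.
Proof.
move=> Pi0 F01; rewrite (bigD1 i0) //=; have /andP[F0 F1] := F01 i0 Pi0.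
apply: le_lt_trans F1; rewrite -[leRHS]mulr1 ler_wpM2l // prodr_ile1 // => i /andP[Pi _].
by have /andP[-> /ltW ->] := F01 i Pi.
Qed.

(* With k the order of s, the product of the |1 - s^j| over the conjugates s^j
   is |Phi_k(1)|, a nonzero integer. *)
Lemma unity_root_aut_far_from1 (s : algC) (m : nat) :
  (0 < m)%N -> s ^+ m = 1 -> s != 1 ->
  exists v : {rmorphism algC -> algC}, 1 <= `|v s - 1|.
Proof.
move=> m_gt0 sm1 s_neq1; have [k prim_s _] := prim_order_exists m_gt0 sm1.
have k_gt1 : (1 < k)%N.
  rewrite ltn_neqAle (prim_order_gt0 prim_s) andbT; apply: contra s_neq1 => /eqP k1.
  by rewrite -[s]expr1 k1 prim_expr_order.
have Phi1_neq0 : ('Phi_k).[1] != 0.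
  apply: contraTneq k_gt1 => Phi1_0.
  have : root (cyclotomic s k) 1.
    by rewrite /root -(Cintr_Cyclotomic prim_s) -(rmorph1 intr) horner_map Phi1_0 rmorph0.
  by rewrite root_cyclotomic // => /prim_order_dvd/(_ 1); rewrite expr1 eqxx dvdn1 => /eqP->.
have Phi1E : ((('Phi_k).[1])%:~R : algC) = \prod_(j < k | coprime j k) (1 - s ^+ j).
  rewrite -(rmorph1 intr) -horner_map (Cintr_Cyclotomic prim_s) horner_prod.
  by apply: eq_bigr => j _; rewrite hornerXsubC.
have [j /andP[co_jk sj_far] | all_near] :=
  pickP [pred j : 'I_k | coprime j k && (1 <= `|1 - s ^+ j|)].
  have [v vE] := Qn_aut_exists co_jk.
  by exists v; rewrite vE ?(prim_expr_order prim_s) // distrC.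
have : \prod_(j < k | coprime j k) `|1 - s ^+ j| < 1.
  apply: (@prodr_ilt1 _ _ _ _ (Ordinal k_gt1)) => [|j co_jk]; first exact: coprime1n.
  rewrite normr_ge0 real_ltNge ?normr_real ?real1 //=.
  by have := all_near j; rewrite /= co_jk => /negbT.
by rewrite -normr_prod -Phi1E real_ltNge ?normr_real ?real1 // norm_intr_ge1 ?intr_int ?intr_eq0.
Qed.

Lemma totient_lt_size_root_poly (N : nat) (z : algC) (P : {poly rat}) :
  N.-primitive_root z -> P != 0 -> root (map_poly ratr P) z -> (totient N < size P)%N.
Proof.
move=> prim_z P_neq0 Pz; have [p [Dp _] dvd_p] := minCpolyP z.
have p_dvd_P : (p %| P)%R by rewrite -dvd_p.
apply: leq_trans (dvdp_leq P_neq0 p_dvd_P).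
by rewrite -(size_map_poly (ratr : rat -> algC)) -Dp (minCpoly_cyclotomic prim_z) size_cyclotomic.
Qed.

(* Otherwise z is a root of X^(2c) + 1 - s (X^(c+c') + X^(c-c')), whose degree
   is below that of its minimal polynomial Phi_N. *)
Lemma prim_root_addV_neq (N c c' : nat) (z : algC) (s : rat) :
  N.-primitive_root z -> (c' < c)%N -> (2 * c < totient N)%N ->
  z ^+ c + z ^- c != ratr s * (z ^+ c' + z ^- c').
Proof.
move=> prim_z lt_c'c c_small; apply/negP => /eqP bE.
have z_neq0 : z != 0.
  by rewrite -normr_eq0 (norm_unity_root (prim_order_gt0 prim_z) (prim_expr_order prim_z)) oner_eq0.
pose P : {poly rat} := 'X^(2 * c) + 1 - s *: ('X^(c + c') + 'X^(c - c')).
have P_neq0 : P != 0.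
  have [e1 e2 e3] : [/\ (2 * c == c + c')%N = false, (2 * c == c - c')%N = false
                    & (2 * c == 0)%N = false] by split; lia.
  apply/eqP => /(congr1 (coefp (2 * c))); rewrite /= !coefE eqxx e1 e2 e3 /=.
  by rewrite addr0 mulr0 subr0 => /eqP; rewrite oner_eq0.
have size_P : (size P <= (2 * c).+1)%N.
  have sizeX k : (k <= 2 * c)%N -> (size ('X^k : {poly rat}) <= (2 * c).+1)%N.
    by rewrite size_polyXn.
  rewrite (leq_trans (size_polyD _ _)) // geq_max (leq_trans (size_polyD _ _)) /=; last first.
    by rewrite geq_max sizeX ?size_poly1.
  rewrite size_polyN (leq_trans (size_scale_leq _ _)) // (leq_trans (size_polyD _ _)) //.
  by rewrite geq_max !sizeX //; lia.
have root_P : root (map_poly ratr P) z.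
  rewrite /root /P rmorphB rmorphD /= map_polyZ rmorphD /= !map_polyXn rmorph1 !hornerE.
  rewrite mul2n -addnn !exprD (exprB (ltnW lt_c'c)) ?unitfE ?expf_neq0 //.
  have zc_neq0 : z ^+ c != 0 by rewrite expf_neq0.
  have zc'_neq0 : z ^+ c' != 0 by rewrite expf_neq0.
  suff -> : z ^+ c * z ^+ c + 1 - ratr s * (z ^+ c * z ^+ c' + z ^+ c / z ^+ c')
          = z ^+ c * (z ^+ c + z ^- c - ratr s * (z ^+ c' + z ^- c')) by rewrite bE subrr mulr0.
  by field; rewrite zc_neq0 zc'_neq0.
have := totient_lt_size_root_poly prim_z P_neq0 root_P; lia.
Qed.

Lemma exprz_eq_abs (F : fieldType) (x y : F) (k : int) :
  x ^ k = y ^ k -> x ^+ `|k|%N = y ^+ `|k|%N.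
Proof. by case: k => n; rewrite ?NegzE ?exprnN // => /invr_inj. Qed.

Lemma quadratic_roots_ratio_identity (F : fieldType) (x1 x2 b1 b2 Q : F) :
  x1 != 0 -> x2 != 0 -> x1 ^+ 2 - b1 * x1 + Q = 0 -> x2 ^+ 2 - b2 * x2 + Q = 0 ->
  (b1 - (x1 / x2)^-1 * b2) * (b1 - (x1 / x2) * b2) = - (x1 / x2 - (x1 / x2)^-1) ^+ 2 * Q.
Proof.
have bE (x b : F) : x != 0 -> x ^+ 2 - b * x + Q = 0 -> b = x + Q / x.
  by move=> x_neq0 root_x; apply: (mulIf x_neq0); rewrite mulrDl divfK // -[LHS]addr0 -root_x; ring.
move=> x1_neq0 x2_neq0 /(bE _ _ x1_neq0)-> /(bE _ _ x2_neq0)->.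
by field; rewrite x1_neq0 x2_neq0.
Qed.

(* At a conjugate v with |v rho^2 - 1| >= 1 both factors on the left are at most
   4, while |v rho - (v rho)^-1| >= 1. *)
Lemma ratio_identity_le16 (b1 b2 rho : algC) (m Q : nat) :
  (0 < m)%N -> rho ^+ m = 1 -> rho ^+ 2 != 1 ->
  (forall v : {rmorphism algC -> algC}, `|v b1| <= 2 /\ `|v b2| <= 2) ->
  (b1 - rho^-1 * b2) * (b1 - rho * b2) = - (rho - rho^-1) ^+ 2 * Q%:R -> (Q <= 16)%N.
Proof.
move=> m_gt0 rho_m rho2_neq1 b_le2 rhoE.
have [v far] : exists v : {rmorphism algC -> algC}, 1 <= `|v (rho ^+ 2) - 1|.
  by apply: (unity_root_aut_far_from1 m_gt0); rewrite // -exprM mulnC exprM rho_m expr1n.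
have vrho1 : `|v rho| = 1 by apply: (norm_unity_root m_gt0); rewrite -rmorphXn rho_m rmorph1.
have vrho_neq0 : v rho != 0 by rewrite -normr_eq0 vrho1 oner_eq0.
have [vb1 vb2] := b_le2 v.
have factor_le4 (r : algC) : `|r| = 1 -> `|v b1 - r * v b2| <= 4.
  move=> r1; rewrite (le_trans (ler_normB _ _)) // normrM r1 mul1r.
  by rewrite -[4]/(2 + 2)%:R natrD lerD.
have dist_ge1 : 1 <= `|v (rho - rho^-1)|.
  have -> : v (rho - rho^-1) = (v (rho ^+ 2) - 1) / v rho.
    by rewrite rmorphB fmorphV rmorphXn; field.
  by rewrite normrM normfV vrho1 invr1 mulr1.
have := congr1 (fun x => `|v x|) rhoE; rewrite /= !rmorphM !rmorphB !rmorphM fmorphV.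
rewrite normrM rmorphN rmorphXn rmorph_nat normrM normrN normrX normr_nat => normE.
rewrite -(ler_nat algC); apply: (@le_trans _ _ (`|v (rho - rho^-1)| ^+ 2 * Q%:R)).
  rewrite -[leLHS]mul1r ler_wpM2r ?ler0n // -(expr1n _ 2).
  by rewrite lerXn2r ?nnegrE ?(le_trans ler01 dist_ge1).
rewrite -normE (_ : 16 = 4 * 4)%N // natrM.
by rewrite ler_pM ?factor_le4 // normfV vrho1 invr1.
Qed.

Lemma quadratic_roots_pow_separated (z : algC) (N c1 c2 Q : nat) (x1 x2 : algC) (k : int) :
  N.-primitive_root z -> c1 != c2 ->
  (2 * c1 < totient N)%N -> (2 * c2 < totient N)%N -> (16 < Q)%N ->
  x1 ^+ 2 - (z ^+ c1 + z ^- c1) * x1 + Q%:R = 0 ->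
  x2 ^+ 2 - (z ^+ c2 + z ^- c2) * x2 + Q%:R = 0 ->
  x1 ^ k = x2 ^ k -> k = 0.
Proof.
move=> prim_z neq_c c1_small c2_small Q_gt16 root1 root2 /exprz_eq_abs powE.
have [/eqP | m_gt0] := posnP `|k|%N; first by rewrite absz_eq0 => /eqP.
have root_neq0 (x b : algC) : x ^+ 2 - b * x + Q%:R = 0 -> x != 0.
  move=> root_x; apply/eqP => x0; move: root_x.
  by rewrite x0 expr0n mulr0 subr0 add0r => /eqP; rewrite pnatr_eq0; lia.
have x1_neq0 := root_neq0 _ _ root1; have x2_neq0 := root_neq0 _ _ root2.
have := quadratic_roots_ratio_identity x1_neq0 x2_neq0 root1 root2.
set rho := x1 / x2 => rhoE.
have rho_m : rho ^+ `|k|%N = 1 by rewrite expr_div_n powE divff ?expf_neq0.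
have [rho2_1 | rho2_neq1] := eqVneq (rho ^+ 2) 1; last first.
  have b_le2 c (v : {rmorphism algC -> algC}) : `|v (z ^+ c + z ^- c)| <= 2.
    rewrite rmorphD fmorphV rmorphXn; apply: norm_addV_le2.
    rewrite normrX (norm_unity_root (prim_order_gt0 prim_z)) ?expr1n //.
    by rewrite -rmorphXn (prim_expr_order prim_z) rmorph1.
  have := ratio_identity_le16 m_gt0 rho_m rho2_neq1 (fun v => conj (b_le2 c1 v) (b_le2 c2 v)) rhoE.
  lia.
have rho_neq0 : rho != 0 by rewrite mulf_neq0 ?invr_eq0.
have rhoV : rho^-1 = rho by apply: (mulfI rho_neq0); rewrite divff // -expr2 rho2_1.
have [s rho_s] : exists s : rat, rho = ratr s.
  have /eqP := rho2_1; rewrite sqrf_eq1 => /orP[]/eqP->.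
    by exists 1; rewrite rmorph1.
  by exists (-1); rewrite rmorphN1.
move: rhoE; rewrite rhoV subrr expr0n /= oppr0 mul0r -expr2 => /eqP.
rewrite sqrf_eq0 subr_eq0 => /eqP b1E.
have b2E : z ^+ c2 + z ^- c2 = rho * (z ^+ c1 + z ^- c1).
  by rewrite b1E mulrA -expr2 rho2_1 mul1r.
case: (ltngtP c1 c2) => [lt12 | lt21 | eq12]; last by rewrite eq12 eqxx in neq_c.
  by have := prim_root_addV_neq s prim_z lt12 c2_small; rewrite b2E rho_s eqxx.
by have := prim_root_addV_neq s prim_z lt21 c1_small; rewrite b1E rho_s eqxx.
Qed.

Lemma exists_weil_separated_conjugates (q B : nat) : (1 < q)%N ->
  exists2 w, in_weil_group q w &
  exists u : 'I_B.+1 -> {rmorphism algC -> algC},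
    forall a b, a != b -> forall k : int, u a w ^ k = u b w ^ k -> k = 0.
Proof.
(* Q = q^5 > 16 is what ratio_identity_le16 needs; a fifth root of w restores
   weight one. *)
move=> q_gt1; pose N := (2 ^ (B + 4))%N; pose Q := (q ^ 5)%N.
have N_gt0 : (0 < N)%N by rewrite expn_gt0.
have [z prim_z] := C_prim_root_exists N_gt0; have zN1 := prim_expr_order prim_z.
have [w root_w] := exists_quadratic_root (z + z^-1) Q%:R.
have weil_y : weil_number q (5.-root w).
  apply: (weil_number_of_quadratic_pow_root q_gt1 N_gt0 zN1 (isT : (0 < 5)%N)).
  by rewrite (mulnC 2 5) exprM rootCK.
exists w.
  exists 1%N, (fun=> 5.-root w), (fun=> 5%:Z); split => //.
  by rewrite big_ord1 -exprnP rootCK.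
pose c (a : 'I_B.+1) := (2 * a + 1)%N.
have coprime_c a : coprime (c a) N.
  by rewrite coprimeXr // coprimen2 /c addn1 mul2n /= odd_double.
pose u a := sval (Qn_aut_exists (coprime_c a)).
have uE a : forall x, x ^+ N = 1 -> u a x = x ^+ c a := svalP (Qn_aut_exists (coprime_c a)).
have root_u a : u a w ^+ 2 - (z ^+ c a + z ^- c a) * u a w + Q%:R = 0.
  move: (congr1 (u a) root_w).
  by rewrite rmorphD rmorphB rmorphXn rmorphM rmorphD fmorphV rmorph_nat rmorph0 (uE a z zN1).
have c_small a : (2 * c a < totient N)%N.
  rewrite totient_pfactor ?addn4 //= !expnS /c.
  by have := ltn_expl B (isT : (1 < 2)%N); have := ltn_ord a; lia.
exists u => a b neq_ab k.
apply: quadratic_roots_pow_separated prim_z _ (c_small a) (c_small b) _ (root_u a) (root_u b).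
  by apply: contra neq_ab => /eqP c_ab; apply/eqP/ord_inj; rewrite /c in c_ab; lia.
by rewrite /Q !expnS expn0; nia.
Qed.

Lemma aut_images_finite (n : nat) (x : 'I_n -> algC) :
  exists r : seq algC, forall (u : {rmorphism algC -> algC}) i, u (x i) \in r.
Proof.
pose P := \prod_(i < n) minCpoly (x i).
have [r Pr] := closed_field_poly_normal P.
exists r => u i; have root_ux : root (minCpoly (x i)) (u (x i)).
  by rewrite -(minCpoly_aut u) root_minCpoly.
have : root P (u (x i)) by rewrite /P (bigD1 i) //= rootM root_ux.
have monic_P : P \is monic by apply: monic_prod => j _; apply: minCpoly_monic.
by rewrite Pr (monicP monic_P) scale1r root_prod_XsubC.
Qed.

Lemma exists_auts_agree (n : nat) (x : 'I_n -> algC) :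
  exists B, forall u : 'I_B.+1 -> {rmorphism algC -> algC},
    exists a b, a != b /\ forall i, u a (x i) = u b (x i).
Proof.
have [r r_mem] := aut_images_finite x.
exists #|{ffun 'I_n -> seq_sub r}| => u.
pose f a : {ffun 'I_n -> seq_sub r} := [ffun i => SeqSub (r_mem (u a) i)].
have /injectivePn[a [b neq_ab fab]] : ~~ injectiveb f.
  by apply/injectiveP => /leq_card; rewrite card_ord ltnn.
exists a, b; split=> // i.
by have := congr1 (fun g : {ffun 'I_n -> seq_sub r} => ssval (g i)) fab; rewrite /= !ffunE.
Qed.

Definition mul_independent (n : nat) (x : 'I_n -> algC) : Prop :=
  forall k : 'I_n -> int, \prod_(i < n) x i ^ k i = 1 -> forall i, k i = 0.

Lemma mul_independent_cons (n : nat) (x : 'I_n -> algC) (w : algC)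
    (u1 u2 : {rmorphism algC -> algC}) :
  mul_independent x -> (forall i, u1 (x i) = u2 (x i)) ->
  (forall k : int, u1 w ^ k = u2 w ^ k -> k = 0) ->
  mul_independent (fun i : 'I_n.+1 => oapp x w (unlift ord0 i)).
Proof.
move=> indep_x agree sep k; rewrite big_ord_recl /= unlift_none /=.
under eq_bigr do rewrite liftK /=.
set P := \prod_(i < n) _ => wP1.
have uP (v : {rmorphism algC -> algC}) : v (w ^ k ord0) * v P = 1.
  by rewrite -rmorphM wP1 rmorph1.
have u12P : u1 P = u2 P.
  by rewrite !rmorph_prod; apply: eq_bigr => i _; rewrite !fmorphXz agree.
have k0 : k ord0 = 0.
  apply: sep; have u2P_neq0 : u2 P != 0.
    apply: contraTneq isT => u2P0; have := uP u2.
    by rewrite u2P0 mulr0 => /eqP; rewrite eq_sym oner_eq0.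
  by apply: (mulIf u2P_neq0); rewrite -!fmorphXz uP -u12P uP.
move: wP1; rewrite k0 expr0z mul1r => /indep_x k_lift0 i.
by case: (unliftP ord0 i) => [j ->|->].
Qed.

Lemma weil_mul_independent (q n : nat) : (1 < q)%N ->
  exists x : 'I_n -> algC, (forall i, in_weil_group q (x i)) /\ mul_independent x.
Proof.
move=> q_gt1; elim: n => [|n [x [weil_x indep_x]]].
  by exists (fun=> 0); split => [[] | k _ []].
have [B agree] := exists_auts_agree x.
have [w weil_w [u sep]] := exists_weil_separated_conjugates B q_gt1.
have [a [b [neq_ab agree_ab]]] := agree u.
exists (fun i => oapp x w (unlift ord0 i)); split.
  by move=> i; case: (unlift ord0 i).
exact: mul_independent_cons indep_x agree_ab (sep a b neq_ab).
Qed.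

Theorem corollary3p9 (q : nat) :
  prime_power q -> infinite_rank (in_weil_group q).
Proof.
move=> [p [e [prime_p [e_gt0 ->]]]] n; apply: weil_mul_independent.
by rewrite -(exp1n e) ltn_exp2r // prime_gt1.
Qed.
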